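(* Let $\mathfrak g$ be the Lie algebra of the isometry group of a rank $1$ symmetric space $M$ of noncompact type, and let $\mathcal N$ be the space defined below. Then: (1) if $M=\mathbb H^n$ ($n\ge2$), then $\mathfrak n=\mathfrak g_\alpha\cong\mathbb R^{n-1}$ and $\mathcal N=\{h\in\mathrm{Sym}_2\mathbb R^{n-1}:\mathrm{tr}\,h=0\}$; (2) if $M=\mathbb{CH}^{2n}$ (real dimension $2n$, $n\ge2$), then $\mathfrak n=\mathfrak g_\alpha\oplus\mathfrak g_{2\alpha}\cong\mathbb C^{n-1}\oplus\mathbb R$, and, viewing $\mathbb C^{n-1}$ as a real vector space with $J$ the multiplication by $i$, $\mathcal N=\{h\in\mathrm{Sym}_2\mathbb C^{n-1}:Jh+hJ=0\}$ (extended by zero on $\mathfrak g_{2\alpha}$); (3) if $M$ is the quaternionic hyperbolic space $\mathbb{HH}^{4n}$ ($n\ge2$) or the octonionic hyperbolic plane $\mathbb{OH}^{16}$, then $\mathcal N=\{0\}$.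
   Context: Notation: $\mathfrak g=\mathfrak p\oplus\mathfrak k$ Cartan decomposition with involution $\sigma$, Killing form $\langle\cdot,\cdot\rangle$, maximal abelian $\mathfrak a\subset\mathfrak p$ (one-dimensional), positive roots $\alpha$ (and $2\alpha$ in the non-real cases), $\mathfrak n=\bigoplus_{\beta\in\Delta^+}\mathfrak g_\beta$ with inner product $(x,y)=-\langle x,\sigma y\rangle$. Symmetric bilinear forms on the orthogonal complement of $\mathfrak a$ in $\mathfrak p$ are identified with $(\cdot,\cdot)$-self-adjoint endomorphisms of $\mathfrak n$ via $x\mapsto\frac1{\sqrt2}(x-\sigma x)$. $\mathcal N$ is the set of self-adjoint endomorphisms $h$ of $\mathfrak n$ such that (a) $h(\mathfrak g_\beta)\subset\mathfrak g_\beta$ for every positive root $\beta$; (b) $h[x,y]=[hx,y]+[x,hy]$ for all $x,y\in\mathfrak n$ (i.e. $h$ is a derivation of $\mathfrak n$); (c) $\sum_{\beta\in\Delta^+}\mathrm{tr}(h|_{\mathfrak g_\beta})\,\beta=0$ in $\mathfrak a^*$. Models: with $\mathbb K\in\{\mathbb R,\mathbb C,\mathbb H,\mathbb O\}$, $\mathfrak g_\alpha=\mathbb K^{n-1}$ (with $n=2$ for $\mathbb O$), $\mathfrak g_{2\alpha}=\mathrm{Im}\,\mathbb K$, and $[v,w]=2\,\mathrm{Im}\sum_i\bar v_iw_i$ for $v,w\in\mathfrak g_\alpha$. *)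

From HB Require Import structures.
From mathcomp Require Import all_boot all_order all_algebra.
Set Implicit Arguments. Unset Strict Implicit. Unset Printing Implicit Defensive.
Import Order.TTheory GRing.Theory Num.Theory.
Local Open Scope ring_scope.

(* Cayley-Dickson algebras of level l (R, C, H, O for l = 0,1,2,3), real dimension 2^l,
   with basis e_0 = 1, e_1, ..., e_{2^l - 1}.  Convention (a,b)(c,d) = (ac - conj(d) b, d a + b conj(c)).
   The index i is split as (low bit = "second component" flag, i./2 = index at level l-1).
   For basis vectors, e_a e_b = (-1)^(cd_sign l a b) e_(a xor b). *)
Fixpoint cd_sign (l a b : nat) : bool :=
  match l with
  | 0 => false
  | l'.+1 =>
    let la := a./2 in let lb := b./2 in
    match odd a, odd b with
    | false, false => cd_sign l' la lb              (* (p,0)(q,0) = (pq,0)       *)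
    | false, true  => cd_sign l' lb la              (* (p,0)(0,q) = (0,qp)       *)
    | true,  false => (lb != 0%N) (+) cd_sign l' la lb   (* (0,p)(q,0) = (0,p conj q)  *)
    | true,  true  => ~~ ((lb != 0%N) (+) cd_sign l' lb la) (* (0,p)(0,q) = (-(conj q) p,0) *)
    end
  end.

(* Elements of K (with dim K = p.+1 = 2^l) are row vectors of coordinates. *)
Definition Kprod (R : ringType) (l p : nat) (x y : 'rV[R]_p.+1) : 'rV[R]_p.+1 :=
  \row_(k < p.+1) \sum_(i < p.+1) \sum_(j < p.+1)
     (if Nat.lxor i j == (k : nat) then (-1) ^+ cd_sign l i j * (x 0 i * y 0 j) else 0).

Definition Kconj (R : ringType) (p : nat) (x : 'rV[R]_p.+1) : 'rV[R]_p.+1 :=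
  \row_(k < p.+1) (if k == ord0 then x 0 k else - x 0 k).

(* g_alpha = K^{n'} : an element v is an n' x dim K matrix (row i = v_i in K).
   g_{2alpha} = Im K = 'rV_p (coordinate k <-> basis vector e_(k+1)).
   Bracket [v,w] = 2 Im sum_i conj(v_i) w_i. *)
Definition brK (R : ringType) (l p n' : nat) (v w : 'M[R]_(n', p.+1)) : 'rV[R]_p :=
  \row_(k < p) (2 * (\sum_(i < n') Kprod l (Kconj (row i v)) (row i w)) 0 (lift ord0 k)).

(* action of an endomorphism of g_alpha, given by its matrix in the coordinates mxvec
   (row-vector convention: x |-> x *m A). *)
Definition actA (R : ringType) (p n' : nat) (A : 'M[R]_(n' * p.+1)) (v : 'M[R]_(n', p.+1))
  : 'M[R]_(n', p.+1) := vec_mx (mxvec v *m A).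

(* The set N: a self-adjoint endomorphism h of n preserving each root space (a) is a pair
   (A on g_alpha, B on g_{2alpha}) of symmetric matrices (the coordinates above are
   orthonormal for (.,.) up to a positive factor on each root space);
   (b) h is a derivation; (c) tr(h|g_alpha) alpha + tr(h|g_{2alpha}) 2alpha = 0. *)
Definition inN (R : ringType) (l p n' : nat) (A : 'M[R]_(n' * p.+1)) (B : 'M[R]_p) : Prop :=
  [/\ A^T = A, B^T = B,
      (forall v w : 'M[R]_(n', p.+1),
          brK l (actA A v) w + brK l v (actA A w) = brK l v w *m B)
    & \tr A + 2 * \tr B = 0].

(* Complex structure J on C^{n'} (= multiplication by i), as a real matrix in the mxvec
   coordinates: (a + b i) i = -b + a i. *)
Definition mulJ (R : ringType) (n' : nat) (v : 'M[R]_(n', 2)) : 'M[R]_(n', 2) :=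
  \matrix_(i < n', k < 2) (if k == ord0 then - v i ord_max else v i ord0).

Definition Jmx (R : ringType) (n' : nat) : 'M[R]_(n' * 2) :=
  lin1_mx (fun x : 'rV[R]_(n' * 2) => mxvec (mulJ (vec_mx x))).
Arguments Jmx {R} n'.

From HB Require Import structures.
From mathcomp Require Import all_boot all_order all_algebra ring.

Set Implicit Arguments.
Unset Strict Implicit.
Unset Printing Implicit Defensive.

Import Order.TTheory GRing.Theory Num.Theory.
Local Open Scope ring_scope.

(* Write the bracket as [v, w]_k = v Omega_k w^T, where Omega_k acts on each coordinate
   of g_alpha = K^(n-1) as twice the right multiplication by the imaginary unit e_(k+1).
   For symmetric h = (A, B), the derivation property reads
   A Omega_k + Omega_k A = sum_m B_mk Omega_m, and the Omega_k satisfy the Clifford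
   relations Omega_k Omega_m + Omega_m Omega_k = -8 delta_km.  Pairing with Omega_j under
   the trace makes B a multiple of the identity proportional to tr A, so condition (c)
   forces B = 0 and tr A = 0: A anticommutes with every Omega_k.  For K = C this is
   J A + A J = 0.  For K = H and K = O the product of the 3, resp. 7, matrices Omega_k is
   a nonzero scalar, and a matrix anticommuting with an odd number of factors of a
   nonzero scalar vanishes.  The needed facts on the multiplication tables are checked
   by computation on integer matrices. *)

(* Coefficient of e_(k+1) in 2 Im (conj(e_a) e_b), read off from the multiplication
   table e_a e_b = (-1)^(cd_sign l a b) e_(a xor b) and conj(e_a) = -e_a for a <> 0. *)
Definition bracket_coef (l a b k : nat) : int :=
  if Nat.lxor a b == k.+1 then (if cd_sign l a b (+) (a != 0%N) then -2 else 2) else 0.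

Definition bracket_table (l k : nat) (a b : nat) : int := bracket_coef l a b k.

(* Integer matrices are functions nat -> nat -> int so that vm_compute can evaluate
   them; imemo tabulates a function, avoiding recomputation in iterated products. *)
Definition imul (n : nat) (f g : nat -> nat -> int) (i j : nat) : int :=
  foldr (fun c acc => f i c * g c j + acc) 0 (iota 0 n).

Definition tab_lookup (T : seq (seq int)) (i j : nat) : int := nth 0 (nth [::] T i) j.

Definition imemo (n : nat) (f : nat -> nat -> int) : nat -> nat -> int :=
  tab_lookup [seq [seq f i j | j <- iota 0 n] | i <- iota 0 n].

Definition iscalar (c : int) (i j : nat) : int := if i == j then c else 0.

Definition iprod (n : nat) (fs : seq (nat -> nat -> int)) : nat -> nat -> int :=
  foldr (fun f acc => imemo n (imul n f acc)) (iscalar 1) fs.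

Definition ieqb (n : nat) (f g : nat -> nat -> int) : bool :=
  all (fun i => all (fun j => f i j == g i j) (iota 0 n)) (iota 0 n).

Definition clifford_table (l p : nat) : bool :=
  all (fun k => all (fun m =>
    ieqb p.+1 (fun a b => imul p.+1 (bracket_table l k) (bracket_table l m) a b
                        + imul p.+1 (bracket_table l m) (bracket_table l k) a b)
              (iscalar (if k == m then -8 else 0)))
    (iota 0 p)) (iota 0 p).

Lemma clifford_table_C : clifford_table 1 1. Proof. by vm_compute. Qed.
Lemma clifford_table_H : clifford_table 2 3. Proof. by vm_compute. Qed.
Lemma clifford_table_O : clifford_table 3 7. Proof. by vm_compute. Qed.

Lemma bracket_prod_H :
  ieqb 4 (iprod 4 [seq bracket_table 2 k | k <- iota 0 3]) (iscalar 8).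
Proof. by vm_compute. Qed.

Lemma bracket_prod_O :
  ieqb 8 (iprod 8 [seq bracket_table 3 k | k <- iota 0 7]) (iscalar (-128)).
Proof. by vm_compute. Qed.

Section IntegerMatrices.
Variable R : pzRingType.

Definition int_mx (n : nat) (f : nat -> nat -> int) : 'M[R]_n :=
  \matrix_(i, j) (f i j)%:~R.

Lemma int_mxM n f g : int_mx n f *m int_mx n g = int_mx n (imul n f g).
Proof.
apply/matrixP=> i j; rewrite !mxE /imul.
have -> : iota 0 n = index_iota 0 n by rewrite /index_iota subn0.
have -> : \sum_(c < n) int_mx n f i c * int_mx n g c j
          = \sum_(0 <= c < n) (f i c * g c j)%:~R.
  by rewrite big_mkord; apply: eq_bigr => c _; rewrite !mxE intrM.
by elim: (index_iota 0 n) => [|c s IH]; rewrite ?big_nil ?big_cons //= intrD IH.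
Qed.

Lemma int_mxD n f g : int_mx n f + int_mx n g = int_mx n (fun i j => f i j + g i j).
Proof. by apply/matrixP=> i j; rewrite !mxE intrD. Qed.

Lemma int_mx_memo n f : int_mx n (imemo n f) = int_mx n f.
Proof.
apply/matrixP=> i j; rewrite !mxE /imemo /tab_lookup.
by rewrite (nth_map 0%N) ?size_iota // (nth_map 0%N) ?size_iota // !nth_iota.
Qed.

Lemma int_mx_scalar n c : int_mx n (iscalar c) = c%:~R%:M.
Proof.
apply/matrixP=> i j; rewrite !mxE /iscalar.
by case: (eqVneq i j) => [->|ne_ij]; rewrite ?eqxx // ifN.
Qed.

Lemma int_mx_eq n f g : ieqb n f g -> int_mx n f = int_mx n g.
Proof.
move=> /allP fg; apply/matrixP=> i j; rewrite !mxE.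
have /allP fg_i : all (fun j => f i j == g i j) (iota 0 n).
  by apply: fg; rewrite mem_iota ltn_ord.
by rewrite (eqP (fg_i j _)) // mem_iota ltn_ord.
Qed.

Lemma int_mx_prod n fs :
  int_mx n (iprod n fs) = foldr mulmx 1%:M [seq int_mx n f | f <- fs].
Proof.
elim: fs => [|f fs IH] /=; first by rewrite int_mx_scalar.
by rewrite int_mx_memo -int_mxM IH.
Qed.
End IntegerMatrices.

Section LinMulmxr.
Variable R : comPzRingType.

Lemma lin_mulmxrM m n (X Y : 'M[R]_n) :
  lin_mulmxr X *m lin_mulmxr Y = lin_mulmxr (X *m Y) :> 'M_(m * n).
Proof.
apply/row_matrixP=> i; rewrite !rowE mulmxA !mul_rV_lin /=.
by rewrite mxvecK mulmxA.
Qed.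

Lemma lin_mulmxr_scalar m n (c : R) : lin_mulmxr (c%:M : 'M_n) = c%:M :> 'M_(m * n).
Proof.
apply/row_matrixP=> i; rewrite !rowE !mul_rV_lin /= mul_mx_scalar linearZ /=.
by rewrite vec_mxK mul_mx_scalar.
Qed.

Lemma lin_mulmxr_foldr m n (s : seq 'M[R]_n) :
  foldr mulmx 1%:M [seq lin_mulmxr X | X <- s] = lin_mulmxr (foldr mulmx 1%:M s) :> 'M_(m * n).
Proof.
elim: s => [|X s IH] /=; first by rewrite lin_mulmxr_scalar.
by rewrite IH lin_mulmxrM.
Qed.

Lemma mxvec_dot m n (X Y : 'M[R]_(m, n)) :
  (mxvec X *m (mxvec Y)^T) 0 0 = \sum_i \sum_j X i j * Y i j.
Proof.
rewrite mxE (reindex _ (curry_mxvec_bij _ _)) /= pair_big /=.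
by apply: eq_bigr => [[i j]] _ /=; rewrite !mxE !mxvecE.
Qed.

End LinMulmxr.

Section BracketOperators.
Variable R : comNzRingType.

Definition bracket_mx (l p k : nat) : 'M[R]_p.+1 := int_mx R p.+1 (bracket_table l k).

Definition bracket_op (l p n' k : nat) : 'M[R]_(n' * p.+1) := lin_mulmxr (bracket_mx l p k).

Lemma brK_bracket_op l p n' (v w : 'M[R]_(n', p.+1)) (k : 'I_p) :
  brK l v w 0 k = (mxvec v *m bracket_op l p n' k *m (mxvec w)^T) 0 0.
Proof.
rewrite /bracket_op mul_vec_lin /= mxvec_dot /brK !mxE summxE mulr_sumr.
apply: eq_bigr => i _; rewrite !mxE.
under [RHS]eq_bigr => b _ do rewrite !mxE mulr_suml.
rewrite exchange_big mulr_sumr; apply: eq_bigr => a _.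
rewrite mulr_sumr; apply: eq_bigr => b _.
rewrite !mxE lift0 /bracket_table /bracket_coef.
case: ifP => _; last by rewrite mulr0 mulr0 mul0r.
have -> : forall x : 'I_p.+1, ((x : nat) != 0%N) = ~~ (x == ord0) by [].
case: (cd_sign _ _ _); case: (_ == ord0); rewrite /= ?expr1 ?expr0; ring.
Qed.

Lemma derivation_iff l p n' (A : 'M[R]_(n' * p.+1)) (B : 'M[R]_p) : A^T = A ->
  (forall v w, brK l (actA A v) w + brK l v (actA A w) = brK l v w *m B) <->
  (forall k : 'I_p, A *m bracket_op l p n' k + bracket_op l p n' k *m A
                    = \sum_m B m k *: bracket_op l p n' m).
Proof.
move=> symA.
have lhsE v w k : (brK l (actA A v) w + brK l v (actA A w)) 0 k =
    (mxvec v *m (A *m bracket_op l p n' k + bracket_op l p n' k *m A) *m (mxvec w)^T) 0 0.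
  rewrite mxE !brK_bracket_op /actA !vec_mxK mulmxDr mulmxDl [RHS]mxE.
  by rewrite trmx_mul symA !mulmxA.
have rhsE v w k : (brK l v w *m B) 0 k =
    (mxvec v *m (\sum_m B m k *: bracket_op l p n' m) *m (mxvec w)^T) 0 0.
  rewrite mxE mulmx_sumr mulmx_suml summxE; apply: eq_bigr => m _.
  by rewrite brK_bracket_op -scalemxAr -scalemxAl [RHS]mxE mulrC.
split=> [der k | eqk v w]; last by apply/rowP=> k; rewrite lhsE rhsE eqk.
apply/matrixP=> i j.
have coefE (M : 'M[R]_(n' * p.+1)) : M i j =
    (mxvec (vec_mx (delta_mx 0 i)) *m M *m (mxvec (vec_mx (delta_mx 0 j)))^T) 0 0.
  by rewrite !vec_mxK -rowE trmx_delta -colE !mxE.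
by rewrite [LHS]coefE [RHS]coefE -lhsE -rhsE der.
Qed.

Lemma bracket_op_anticomm l p n' : clifford_table l p -> forall k m : 'I_p,
  bracket_op l p n' k *m bracket_op l p n' m + bracket_op l p n' m *m bracket_op l p n' k
  = (if k == m then -8 else 0)%:M.
Proof.
move=> /allP cliff k m; rewrite /bracket_op !lin_mulmxrM -linearD /=.
have := cliff k; rewrite mem_iota /= ltn_ord => /(_ isT) /allP cliff_k.
have := cliff_k m; rewrite mem_iota /= ltn_ord => /(_ isT) /(int_mx_eq R) table_eq.
rewrite /bracket_mx !int_mxM int_mxD table_eq int_mx_scalar lin_mulmxr_scalar.
have -> : (k == m) = (k == m :> nat) by [].
by case: (k == m :> nat); rewrite ?intrN.
Qed.

Lemma bracket_op_prod l p n' (c : int) :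
  ieqb p.+1 (iprod p.+1 [seq bracket_table l k | k <- iota 0 p]) (iscalar c) ->
  foldr mulmx 1%:M [seq bracket_op l p n' k | k <- iota 0 p] = c%:~R%:M.
Proof.
move=> /(int_mx_eq R) prod_eq.
have -> : [seq bracket_op l p n' k | k <- iota 0 p]
        = map lin_mulmxr (map (int_mx R p.+1) [seq bracket_table l k | k <- iota 0 p]).
  by rewrite -!map_comp.
by rewrite lin_mulmxr_foldr -int_mx_prod prod_eq int_mx_scalar lin_mulmxr_scalar.
Qed.
End BracketOperators.

Section Anticommutation.
Variables (R : numFieldType) (N : nat).
Implicit Types (A X : 'M[R]_N) (c : R).

Lemma mx_double_eq0 A : A + A = 0 -> A = 0.
Proof.
by rewrite -mulr2n -scaler_nat => /eqP; rewrite scaler_eq0 pnatr_eq0 => /eqP.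
Qed.

Lemma anticomm_foldr A (s : seq 'M[R]_N) :
  {in s, forall X, A *m X + X *m A = 0} ->
  A *m foldr mulmx 1%:M s = (-1) ^+ size s *: (foldr mulmx 1%:M s *m A).
Proof.
elim: s => [|X s IH] anti /=; first by rewrite expr0 scale1r mulmx1 mul1mx.
have AX : A *m X = - (X *m A).
  by apply/eqP; rewrite -addr_eq0 anti ?mem_head.
rewrite mulmxA AX mulNmx -[X *m A *m _]mulmxA IH => [|Y sY]; last first.
  by rewrite anti // inE sY orbT.
by rewrite -scalemxAr !mulmxA exprS mulN1r scaleNr.
Qed.

Lemma anticomm_odd_prod_eq0 A (s : seq 'M[R]_N) c :
  c != 0 -> odd (size s) -> foldr mulmx 1%:M s = c%:M ->
  {in s, forall X, A *m X + X *m A = 0} -> A = 0.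
Proof.
move=> c_neq0 odd_s prod_s /anticomm_foldr.
rewrite prod_s -signr_odd odd_s expr1 scaleN1r mul_mx_scalar mul_scalar_mx.
move/eqP; rewrite -addr_eq0 -scalerDr scaler_eq0 (negbTE c_neq0) => /eqP.
exact: mx_double_eq0.
Qed.

Lemma mxtrace_anticomm_eq0 A X c :
  c != 0 -> X *m X = c%:M -> A *m X + X *m A = 0 -> \tr A = 0.
Proof.
move=> c_neq0 XX anti.
have XA : X *m A = - (A *m X) by apply/eqP; rewrite -addr_eq0 addrC anti.
have tr_XXA : \tr (X *m X *m A) = 0.
  have : \tr (X *m X *m A) *+ 2 == 0.
    rewrite mulr2n {1}mxtrace_mulC -mulmxA XA mulmxN.
    by rewrite raddfN /= mulmxA mxtrace_mulC mulmxA addrN.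
  by rewrite mulrn_eq0 => /eqP.
move: tr_XXA; rewrite XX mul_scalar_mx mxtraceZ => /eqP.
by rewrite mulf_eq0 (negbTE c_neq0) => /eqP.
Qed.

Lemma clifford_derivation_eq0 q (J : 'I_q -> 'M[R]_N) A (B : 'M[R]_q) c :
  (0 < N)%N -> c != 0 ->
  (forall j k, J j *m J k + J k *m J j = (if j == k then c else 0)%:M) ->
  (forall k, A *m J k + J k *m A = \sum_m B m k *: J m) ->
  \tr A + 2 * \tr B = 0 -> B = 0.
Proof.
move=> N_gt0 c_neq0 cliff der tr_cond.
have N_neq0 : (N == 0%N) = false by rewrite eqn0Ngt N_gt0.
have trJJ j m : 2 * \tr (J j *m J m) = (if j == m then c else 0) *+ N.
  by rewrite -[RHS]mxtrace_scalar -cliff mxtraceD (mxtrace_mulC (J m)) mulr_natl mulr2n.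
have tr_der j k : (B j k *+ N) * c = 2 * ((if j == k then c else 0) * \tr A).
  have := congr1 (fun M => 2 * \tr (J j *m M)) (der k) => /=.
  rewrite mulmxDr mxtraceD mulmxA (mxtrace_mulC (J j *m A)) mulmxA -mxtraceD.
  rewrite !mulmxA -mulmxDl cliff mul_scalar_mx mxtraceZ (eq_sym k j) => ->.
  rewrite mulmx_sumr raddf_sum (bigD1 j) //= big1 => [|m m_neq_j].
    by rewrite addr0 -scalemxAr mxtraceZ mulrCA trJJ eqxx mulrnAl mulrnAr.
  rewrite -scalemxAr mxtraceZ; apply/eqP; rewrite mulf_eq0; apply/orP; right.
  have /eqP := trJJ j m.
  by rewrite [j == m]eq_sym (negbTE m_neq_j) mul0rn mulf_eq0 pnatr_eq0.
have B_diag j : B j j *+ N = 2 * \tr A.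
  by apply: (mulIf c_neq0); rewrite tr_der eqxx mulrCA mulrC.
have B_offdiag j k : j != k -> B j k = 0.
  move=> j_neq_k; move: (tr_der j k); rewrite (negbTE j_neq_k) mul0r mulr0 => /eqP.
  by rewrite mulf_eq0 (negbTE c_neq0) orbF mulrn_eq0 N_neq0 => /eqP.
have trA : \tr A = - (2 * \tr B) by apply/eqP; rewrite -addr_eq0 tr_cond.
have trB : \tr B = 0.
  have : \tr B *+ N = (2 * \tr A) *+ q.
    by rewrite /mxtrace -sumrMnl (eq_bigr _ (fun i _ => B_diag i)) sumr_const card_ord.
  rewrite trA !mulr_natl -mulrnA mulNrn => /eqP.
  by rewrite -subr_eq0 opprK -mulrnA -mulrnDr mulrn_eq0 addn_eq0 N_neq0 => /eqP.
apply/matrixP=> j k; rewrite mxE; case: (eqVneq j k) => [<-|]; last exact: B_offdiag.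
by have /eqP := B_diag j; rewrite trA trB mulr0 oppr0 mulr0 mulrn_eq0 N_neq0 => /eqP.
Qed.

End Anticommutation.

Section RootSpaceDerivations.
Variable R : numFieldType.

Lemma inN_real n' (A : 'M[R]_(n' * 1)) (B : 'M[R]_0) :
  inN 0 A B <-> (A^T = A /\ \tr A = 0).
Proof.
rewrite /inN; have -> : \tr B = 0 by rewrite /mxtrace big_ord0.
rewrite mulr0 addr0; split=> [[symA _ _ trA] | [symA trA]] //.
by split=> //; [apply/matrixP=> -[] | move=> v w; apply/rowP=> -[]].
Qed.

Lemma inN_clifford l p n' (A : 'M[R]_(n' * p.+1)) (B : 'M[R]_p) :
  clifford_table l p -> (0 < n')%N ->
  inN l A B <-> [/\ A^T = A, B = 0, \tr A = 0 &
    forall k : 'I_p, A *m bracket_op R l p n' k + bracket_op R l p n' k *m A = 0].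
Proof.
move=> cliff n'_gt0; have N_gt0 : (0 < n' * p.+1)%N by rewrite muln_gt0 n'_gt0.
have sum0 k : \sum_m (0 : 'M[R]_p) m k *: bracket_op R l p n' m = 0.
  by rewrite big1 // => m _; rewrite mxE scale0r.
split=> [[symA _ der tr_cond] | [symA -> trA anti]].
  have der_k := (derivation_iff l B symA).1 der.
  have n8_neq0 : (-8 : R) != 0 by rewrite oppr_eq0 pnatr_eq0.
  have B0 := clifford_derivation_eq0 N_gt0 n8_neq0 (bracket_op_anticomm R n' cliff)
    der_k tr_cond.
  split=> // [|k]; first by move: tr_cond; rewrite B0 mxtrace0 mulr0 addr0.
  by rewrite der_k B0 sum0.
split; rewrite ?trmx0 ?trA ?mxtrace0 ?mulr0 ?addr0 //.
by apply/(derivation_iff l 0 symA) => k; rewrite anti sum0.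
Qed.

Lemma bracket_op_C n' : bracket_op R 1 1 n' 0 = 2 *: Jmx n'.
Proof.
have bracket_mx_C (v : 'M[R]_(n', 2)) : v *m bracket_mx R 1 1 0 = 2 *: mulJ v.
  apply/matrixP=> i c; rewrite !mxE big_ord_recl big_ord1 !mxE.
  case: c => [[|[|//]]] c_lt2 /=; rewrite /bracket_table /bracket_coef /=.
    by rewrite (_ : lift ord0 ord0 = ord_max); [ring | exact: val_inj].
  by ring.
apply/matrixP=> i j; rewrite /bracket_op /lin_mulmxr /lin_mx /Jmx.
rewrite [LHS]mxE [RHS]mxE [X in _ * X]mxE /= bracket_mx_C linearZ /=.
by rewrite [LHS]mxE.
Qed.

Lemma inN_complex n' (A : 'M[R]_(n' * 2)) (B : 'M[R]_1) : (0 < n')%N ->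
  inN 1 A B <-> [/\ A^T = A, Jmx n' *m A + A *m Jmx n' = 0 & B = 0].
Proof.
move=> n'_gt0; rewrite (inN_clifford A B clifford_table_C n'_gt0).
set X := bracket_op R 1 1 n' 0.
have antiJ : (Jmx n' *m A + A *m Jmx n' = 0) <-> (A *m X + X *m A = 0).
  rewrite /X bracket_op_C -scalemxAr -scalemxAl -scalerDr addrC.
  split=> [-> | /eqP]; first by rewrite scaler0.
  by rewrite scaler_eq0 pnatr_eq0 => /eqP.
have XX : X *m X = (-4)%:M.
  apply: (scalerI (a := 2)); first by rewrite pnatr_eq0.
  rewrite scaler_nat mulr2n (bracket_op_anticomm R n' clifford_table_C 0 0).
  by rewrite eqxx scale_scalar_mx mulrN -natrM.
split=> [[symA B0 _ anti] | [symA JA B0]].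
  by split; [exact: symA | exact/antiJ/(anti ord0) | exact: B0].
have trA : \tr A = 0.
  by apply: (mxtrace_anticomm_eq0 _ XX (antiJ.1 JA)); rewrite oppr_eq0 pnatr_eq0.
by split; [exact: symA | exact: B0 | exact: trA | move=> k; rewrite ord1; apply/antiJ].
Qed.

Lemma inN_odd_clifford l p n' (c : int) (A : 'M[R]_(n' * p.+1)) (B : 'M[R]_p) :
  clifford_table l p -> odd p -> c != 0 ->
  ieqb p.+1 (iprod p.+1 [seq bracket_table l k | k <- iota 0 p]) (iscalar c) ->
  (0 < n')%N -> inN l A B <-> A = 0 /\ B = 0.
Proof.
move=> cliff odd_p c_neq0 prod n'_gt0; rewrite (inN_clifford A B cliff n'_gt0).
split=> [[_ B0 _ anti] | [-> ->]]; last first.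
  by split; rewrite ?trmx0 ?mxtrace0 // => k; rewrite mul0mx mulmx0 addr0.
split; last exact: B0.
apply: (anticomm_odd_prod_eq0 _ _ (bracket_op_prod R n' prod)).
- by rewrite intr_eq0.
- by rewrite size_map size_iota.
- by move=> X /mapP[k]; rewrite mem_iota /= => k_lt_p ->; apply: (anti (Ordinal k_lt_p)).
Qed.
End RootSpaceDerivations.

Theorem lemma5p12 (R : realFieldType) :
  (forall n : nat, (2 <= n)%N ->
     forall (A : 'M[R]_(n.-1 * 1)) (B : 'M[R]_0),
       inN 0 A B <-> (A^T = A /\ \tr A = 0)) /\
  (forall n : nat, (2 <= n)%N ->
     forall (A : 'M[R]_(n.-1 * 2)) (B : 'M[R]_1),
       inN 1 A B <-> [/\ A^T = A, Jmx n.-1 *m A + A *m Jmx n.-1 = 0 & B = 0]) /\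
  (forall n : nat, (2 <= n)%N ->
     forall (A : 'M[R]_(n.-1 * 4)) (B : 'M[R]_3),
       inN 2 A B <-> (A = 0 /\ B = 0)) /\
  (forall (A : 'M[R]_(1 * 8)) (B : 'M[R]_7),
       inN 3 A B <-> (A = 0 /\ B = 0)).
Proof.
have pred_gt0 n : (2 <= n)%N -> (0 < n.-1)%N by case: n => [|[|n]].
split; [|split; [|split]].
- by move=> n _ A B; apply: inN_real.
- by move=> n n_ge2 A B; apply/inN_complex/pred_gt0.
- move=> n n_ge2 A B.
  by apply: (inN_odd_clifford A B clifford_table_H _ _ bracket_prod_H (pred_gt0 n n_ge2)).
- by move=> A B; apply: (inN_odd_clifford A B clifford_table_O _ _ bracket_prod_O).
Qed.
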